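(* In the RSP setting described in the context, let $b\in\mathbb{N}^+$ and let $i^*$ be the smallest integer $i\ge 0$ such that $C_{\mathrm{opt}}(G^-_{S_i})>b$ (assuming such an $i$ exists). Define $L'=b\cdot S_{i^*}$, and $U'=U$ if $i^*=0$, $U'=2S_{i^*}(b+n)$ if $i^*>0$. Then $L'\le C_{\mathrm{opt}}(G)\le U'$ and $U'/L'\in O(1+n/b)$.
   Context: RSP setting: $G=(V,E,c,r)$ is a weakly connected directed graph with $n=|V|$, $m=|E|$, $c,r:E\to\mathbb{R}_{\ge0}$, vertices $s\ne t$, bound $R\ge 0$. Paths are edge sets; $P_v$ = set of paths from $s$ to $v$; $C_G(p)=\sum_{e\in p}c(e)$, $R_G(p)=\sum_{e\in p}r(e)$; $C_{\mathrm{opt}}(G)=\min\{C_G(p):p\in P_t,\ R_G(p)\le R\}$. It is assumed that a path $p\in P_t$ with $R_G(p)\le R$ exists and that $C_{\mathrm{opt}}(G)>0$. For $S>0$, $G^-_S=(V,E,c^-_S,r)$ with $c^-_S(e)=\lfloor c(e)/S\rfloor$ (same $s,t,R$). Bounds $L,U$: sort the edges $e_1,\dots,e_m$ ascending by cost; let $j^*$ be the smallest $j$ such that some $p\in P_t$ with $R_G(p)\le R$ uses only edges from $\{e_1,\dots,e_j\}$; set $L=c(e_{j^*})$ and $U=nL$ (these satisfy $L\le C_{\mathrm{opt}}(G)\le U$). Scaling factors: $S_i=2^{-i}U/(2n)$ for $i\in\mathbb{N}_0$. *)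

From HB Require Import structures.
From mathcomp Require Import all_boot all_order all_algebra.
From mathcomp Require Import boolp reals.
Set Implicit Arguments. Unset Strict Implicit. Unset Printing Implicit Defensive.
Import Order.TTheory GRing.Theory Num.Theory.
Local Open Scope ring_scope.

Section RSP.
Variables (V E : finType) (src tgt : E -> V).

Definition und_adj : rel V :=
  [rel x y | [exists e, ((src e == x) && (tgt e == y)) || ((src e == y) && (tgt e == x))]].
Definition weakly_connected : Prop := forall x y : V, connect und_adj x y.

Fixpoint walk_from (u : V) (es : seq E) : bool :=
  if es is e :: es' then (src e == u) && walk_from (tgt e) es' else true.

Definition is_path (s v : V) (p : {set E}) : Prop :=
  exists es : seq E,
    [/\ walk_from s es, last s (map tgt es) = v,
        uniq (s :: map tgt es) & p = [set e in es]].

Variable R : realType.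

Definition pcost (w : E -> R) (p : {set E}) : R := \sum_(e in p) w e.

Definition feasible (r : E -> R) (s t : V) (Rb : R) (p : {set E}) : Prop :=
  is_path s t p /\ pcost r p <= Rb.

(* C_opt for cost function w : the minimum of pcost w over feasible paths
   (0 if there is none; the theorem assumes there is one). *)
Definition Copt (w r : E -> R) (s t : V) (Rb : R) : R :=
  let F := [set p : {set E} | `[< feasible r s t Rb p >]] in
  if [pick p in F] is Some p0 then \big[Order.min/pcost w p0]_(p in F) pcost w p
  else 0.

Definition cminus (c : E -> R) (S : R) : E -> R :=
  fun e => (Num.floor (c e / S))%:~R.

Definition sorted_edges (c : E -> R) : seq E :=
  sort (fun e1 e2 => c e1 <= c e2) (enum E).

Definition feasible_prefix (c r : E -> R) (s t : V) (Rb : R) (j : nat) : Prop :=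
  exists p : {set E}, feasible r s t Rb p /\
    p \subset [set e in take j (sorted_edges c)].

(* L = c(e_jstar), jstar being 1-based *)
Definition Lval (c : E -> R) (jstar : nat) : R :=
  nth 0 (map c (sorted_edges c)) jstar.-1.

Definition Sfac (U : R) (n i : nat) : R := U / (2 * n%:R) / 2 ^+ i.

End RSP.

From HB Require Import structures.
From mathcomp Require Import all_boot all_order all_algebra.
From mathcomp Require Import boolp reals.
From mathcomp Require Import ring.
Import Order.TTheory GRing.Theory Num.Theory.
Set Implicit Arguments.
Local Open Scope ring_scope.

(* Rounding each cost down to a multiple of S loses less than S per edge, and a
   path has fewer than n edges, so
     S * C_opt(G^-_S) <= C_opt(G) <= S * (C_opt(G^-_S) + n).
   At S = S_{i*} the left inequality gives L' <= C_opt(G).  For i* > 0,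
   minimality of i* gives C_opt(G^-_S) <= b at S = S_{i*-1} = 2 S_{i*}, and
   the right inequality gives C_opt(G) <= U'.  For i* = 0, a feasible path
   inside the first j* edges has fewer than n edges of cost at most L, so
   C_opt(G) <= nL = U.  In both cases U'/L' = 2 (1 + n/b). *)

Section ScaledCosts.
Variables (R : realType) (V E : finType) (src tgt : E -> V).
Implicit Types (w c r : E -> R) (s t v : V) (Rb S : R) (p : {set E}).

Lemma Copt_le_pcost w r s t Rb p :
  feasible src tgt r s t Rb p -> Copt src tgt w r s t Rb <= pcost w p.
Proof.
move=> fp; rewrite /Copt.
have pF : p \in [set p : {set E} | `[< feasible src tgt r s t Rb p >]].
  by rewrite inE; apply/asboolP.
case: pickP => [p0 _|noF]; last by rewrite noF in pF.
by rewrite (bigD1 p pF) /= ge_min lexx.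
Qed.

Lemma le_Copt w r s t Rb (x : R) :
  (exists p, feasible src tgt r s t Rb p) ->
  (forall p, feasible src tgt r s t Rb p -> x <= pcost w p) ->
  x <= Copt src tgt w r s t Rb.
Proof.
move=> [p fp] lb; rewrite /Copt.
case: pickP => [p0 Fp0|noF].
  apply: (big_ind (fun y => x <= y)).
  - by apply: lb; move: Fp0; rewrite inE => /asboolP.
  - by move=> y z xy xz; rewrite le_min xy xz.
  - by move=> q; rewrite inE => /asboolP /lb.
by have := noF p; rewrite inE => /negbT/negP; case; apply/asboolP.
Qed.

Lemma path_card_lt s v p : is_path src tgt s v p -> (#|p| < #|V|)%N.
Proof.
move=> [es [_ _ uniq_vs ->]]; rewrite cardsE.
apply: leq_ltn_trans (card_size es) _.
move/card_uniqP: uniq_vs; rewrite /= size_map => <-.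
exact: max_card.
Qed.

Lemma feasible_card_le r s t Rb p :
  feasible src tgt r s t Rb p -> #|p|%:R <= #|V|%:R :> R.
Proof. by case=> /path_card_lt /ltnW; rewrite ler_nat. Qed.

Lemma pcost_cminus_le c S p : 0 < S -> pcost (cminus c S) p <= pcost c p / S.
Proof.
move=> S_gt0; rewrite /pcost mulr_suml; apply: ler_sum => e _.
exact: floor_le.
Qed.

Lemma pcost_le_cminus c S p : 0 < S ->
  pcost c p <= S * (pcost (cminus c S) p + #|p|%:R).
Proof.
move=> S_gt0; rewrite /pcost -sum1_card natr_sum -big_split mulr_sumr /=.
apply: ler_sum => e _.
have /andP [_ floor_gt] := floor_itv (c e / S).
rewrite -ler_pdivrMl // mulrC; apply/ltW/(lt_le_trans floor_gt).
by rewrite /cminus intrD.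
Qed.

Lemma Copt_cminus_le c r s t Rb S : 0 < S ->
  (exists p, feasible src tgt r s t Rb p) ->
  S * Copt src tgt (cminus c S) r s t Rb <= Copt src tgt c r s t Rb.
Proof.
move=> S_gt0 exf; apply: le_Copt => // p fp.
rewrite mulrC -ler_pdivlMr //.
exact: le_trans (Copt_le_pcost _ fp) (pcost_cminus_le c S p S_gt0).
Qed.

Lemma Copt_le_cminus c r s t Rb S : 0 < S ->
  (exists p, feasible src tgt r s t Rb p) ->
  Copt src tgt c r s t Rb <= S * (Copt src tgt (cminus c S) r s t Rb + #|V|%:R).
Proof.
move=> S_gt0 exf; rewrite mulrC -ler_pdivrMr // -lerBlDr.
apply: le_Copt => // p fp; rewrite lerBlDr ler_pdivrMr // mulrC.
apply: le_trans (Copt_le_pcost c fp) _.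
apply: le_trans (pcost_le_cminus c S p S_gt0) _.
by rewrite ler_pM2l // lerD2l (feasible_card_le fp).
Qed.

Lemma Lval_ge0 c j : (forall e, 0 <= c e) -> 0 <= Lval c j.
Proof.
move=> c_ge0; rewrite /Lval.
case: (ltnP j.-1 (size (map c (sorted_edges c)))) => [j_lt|j_ge].
  by have /mapP [e _ ->] := mem_nth 0 j_lt.
by rewrite nth_default.
Qed.

Lemma le_Lval c j e : (j <= size (sorted_edges c))%N ->
  e \in take j (sorted_edges c) -> c e <= Lval c j.
Proof.
set es := sorted_edges c => j_le e_in.
have es_sorted : sorted (fun e1 e2 => c e1 <= c e2) es.
  by apply: sort_sorted => x y; apply: le_total.
have j_gt0 : (0 < j)%N by case: j {j_le} e_in => //; rewrite take0.
have k_lt : (index e (take j es) < j)%N.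
  by rewrite -index_mem in e_in; apply: leq_trans e_in _; rewrite size_take_min geq_minl.
have -> : e = nth e es (index e (take j es)) by rewrite -(nth_take e k_lt) nth_index.
rewrite /Lval (nth_map e) -/es; last by rewrite prednK.
have c_le_trans : transitive (fun e1 e2 => c e1 <= c e2) by move=> ? ? ?; apply: le_trans.
apply: (sorted_leq_nth c_le_trans (fun x => lexx (c x)) e es_sorted).
- by rewrite inE (leq_trans k_lt j_le).
- by rewrite inE prednK.
- by rewrite -ltnS prednK.
Qed.

Lemma Copt_le_prefix c r s t Rb j : (forall e, 0 <= c e) ->
  (j <= size (sorted_edges c))%N -> feasible_prefix src tgt c r s t Rb j ->
  Copt src tgt c r s t Rb <= #|V|%:R * Lval c j.
Proof.
move=> c_ge0 j_le [p [fp p_sub]].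
apply: le_trans (Copt_le_pcost c fp) _.
apply: (@le_trans _ _ (\sum_(e in p) Lval c j)).
  apply: ler_sum => e e_p; apply: le_Lval => //.
  by have := subsetP p_sub e e_p; rewrite inE.
rewrite sumr_const -[_ *+ #|p|]mulr_natl.
apply: (ler_wpM2r (Lval_ge0 c j c_ge0)); exact: feasible_card_le fp.
Qed.

Lemma min_feasible_prefix_le_size c r s t Rb j :
  feasible_prefix src tgt c r s t Rb j ->
  (forall i, (i < j)%N -> ~ feasible_prefix src tgt c r s t Rb i) ->
  (j <= size (sorted_edges c))%N.
Proof.
move=> [p [fp p_sub]] minj; case: leqP => // size_lt; exfalso.
apply: (minj _ size_lt); exists p; split => //.
by rewrite take_size -(take_oversize (ltnW size_lt)).
Qed.

End ScaledCosts.

Lemma Sfac_gt0 (R : realType) (U : R) n i : 0 < U -> (0 < n)%N -> 0 < Sfac U n i.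
Proof. by move=> U_gt0 n_gt0; rewrite /Sfac !divr_gt0 ?exprn_gt0 ?mulr_gt0 ?ltr0n. Qed.

Lemma SfacS (R : realType) (U : R) n i : (0 < n)%N -> Sfac U n i = 2 * Sfac U n i.+1.
Proof.
move=> n_gt0; rewrite /Sfac exprS; field.
by rewrite expf_neq0 ?mulf_neq0 ?pnatr_eq0 -?lt0n.
Qed.

Theorem lemma8 (R : realType) :
  exists K : R, forall (V E : finType) (src tgt : E -> V) (c r : E -> R)
    (s t : V) (Rb : R) (jstar : nat) (b : nat) (istar : nat),
    weakly_connected src tgt ->
    (forall e, 0 <= c e) -> (forall e, 0 <= r e) -> s != t -> 0 <= Rb ->
    (exists p, feasible src tgt r s t Rb p) ->
    0 < Copt src tgt c r s t Rb ->
    (* j* : smallest j such that a feasible path uses only e_1..e_j *)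
    feasible_prefix src tgt c r s t Rb jstar ->
    (forall j, (j < jstar)%N -> ~ feasible_prefix src tgt c r s t Rb j) ->
    let L := Lval c jstar in
    let n := #|V| in
    let U := n%:R * L in
    (0 < b)%N ->
    (* i* : smallest i with C_opt(G^-_{S_i}) > b *)
    b%:R < Copt src tgt (cminus c (Sfac U n istar)) r s t Rb ->
    (forall i, (i < istar)%N ->
       ~ (b%:R < Copt src tgt (cminus c (Sfac U n i)) r s t Rb)) ->
    let L' := b%:R * Sfac U n istar in
    let U' := if istar == 0%N then U else 2 * Sfac U n istar * (b + n)%:R in
    [/\ L' <= Copt src tgt c r s t Rb, Copt src tgt c r s t Rb <= U'
      & U' / L' <= K * (1 + n%:R / b%:R)].
Proof.
exists 2 => V E src tgt c r s t Rb jstar b istar _ c_ge0 _ _ _ exf C_gt0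
  fpj minj L n U b_gt0 b_lt min_istar L' U'.
set C := Copt src tgt c r s t Rb in C_gt0 *.
have n_gt0 : (0 < n)%N by case: exf => p [/path_card_lt /(leq_ltn_trans (leq0n _))].
have C_le_U : C <= U.
  by apply: Copt_le_prefix => //; apply: min_feasible_prefix_le_size minj.
have U_gt0 : 0 < U by apply: lt_le_trans C_le_U.
have S_gt0 i : 0 < Sfac U n i by apply: Sfac_gt0.
have b_gt0R : 0 < b%:R :> R by rewrite ltr0n.
have n_gt0R : 0 < n%:R :> R by rewrite ltr0n.
rewrite {}/L' {}/U'; split.
- apply: le_trans (Copt_cminus_le c _ (S_gt0 istar) exf).
  by rewrite mulrC ler_pM2l // ltW.
- case: istar b_lt min_istar => [|i] _ min_istar //=.
  have C_scaled_le : Copt src tgt (cminus c (Sfac U n i)) r s t Rb <= b%:R.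
    by rewrite leNgt; apply/negP/min_istar.
  rewrite -SfacS // natrD.
  apply: le_trans (Copt_le_cminus c _ (S_gt0 i) exf) _.
  by rewrite ler_pM2l // lerD2r.
- case: istar {b_lt min_istar} => [|i] /=.
    rewrite /Sfac expr0 divr1 [X in X <= _](_ : _ = 2 * (n%:R / b%:R)).
      by rewrite ler_pM2l // lerDr.
    by field; rewrite !gt_eqF.
  rewrite natrD [X in X <= _](_ : _ = 2 * (1 + n%:R / b%:R)) //.
  by field; rewrite !gt_eqF ?S_gt0.
Qed.
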